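(* Let $T$ be a ring with $J(T)=0$. Then either $T$ has a maximal subring or the center $C(T)$ of $T$ is integrally closed in $T$, i.e., every element of $T$ which is a root of a monic polynomial with coefficients in $C(T)$ belongs to $C(T)$.
   Context: All rings are associative with identity $1\neq0$; subrings contain the identity. A maximal subring of $T$ is a proper subring with no subring strictly between it and $T$. $J(T)$ is the Jacobson radical of $T$. *)

From mathcomp Require Import all_boot all_algebra.
Set Implicit Arguments. Unset Strict Implicit. Unset Printing Implicit Defensive.
Import GRing.Theory.
Local Open Scope ring_scope.

Definition is_subring (T : nzRingType) (S : T -> Prop) : Prop :=
  [/\ S 1, (forall x y, S x -> S y -> S (x - y))
         & (forall x y, S x -> S y -> S (x * y))].

Definition is_maximal_subring (T : nzRingType) (S : T -> Prop) : Prop :=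
  [/\ is_subring S, (exists x, ~ S x)
    & forall S' : T -> Prop, is_subring S' -> (forall x, S x -> S' x) ->
        (forall x, S' x <-> S x) \/ (forall x, S' x)].

Definition has_maximal_subring (T : nzRingType) : Prop :=
  exists S : T -> Prop, is_maximal_subring S.

Definition is_left_ideal (T : nzRingType) (I : T -> Prop) : Prop :=
  [/\ I 0, (forall x y, I x -> I y -> I (x - y))
         & (forall r x, I x -> I (r * x))].

Definition is_maximal_left_ideal (T : nzRingType) (I : T -> Prop) : Prop :=
  [/\ is_left_ideal I, ~ I 1
    & forall I' : T -> Prop, is_left_ideal I' -> (forall x, I x -> I' x) ->
        (forall x, I' x <-> I x) \/ (forall x, I' x)].

Definition jacobson (T : nzRingType) (x : T) : Prop :=
  forall I : T -> Prop, is_maximal_left_ideal I -> I x.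

Definition center (T : nzRingType) (x : T) : Prop :=
  forall y : T, x * y = y * x.

Definition center_integrally_closed (T : nzRingType) : Prop :=
  forall (p : {poly T}) (x : T),
    p \is monic -> (forall i, center p`_i) -> root p x -> center x.

(* Suppose T has no maximal subring and x is a root of a monic polynomial with
   central coefficients.  As J(T) = 0, it suffices to show that every
   commutator [x, y] lies in every maximal left ideal M.  If M were not
   two-sided, its idealizer would be a maximal subring; so M is two-sided and
   D = T/M is a division ring in which the image of x is still integral over
   the center.  In a division ring such an x, if not central, makes D finitely
   generated over the centralizer C_D(x): an elimination in the D-bimodule
   spanned by the powers of x produces a central sequence, and with it an
   invertible element of C_D(x) expressing every y as a C_D(x)-combination of
   finitely many fixed elements.  Zorn's lemma then yields a maximal subring of
   D, whose preimage is a maximal subring of T. *)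

From HB Require Import structures.
From mathcomp Require Import all_boot all_algebra.
From mathcomp Require Import boolp classical_sets generic_quotient ring_quotient.
Set Implicit Arguments. Unset Strict Implicit. Unset Printing Implicit Defensive.
Import GRing.Theory.
Local Open Scope ring_scope.

Section Subring.
Variables (T : nzRingType) (S : T -> Prop).
Hypothesis subS : is_subring S.

Lemma subring1 : S 1. Proof. by case: subS. Qed.

Lemma subringB x y : S x -> S y -> S (x - y). Proof. by case: subS => _ + _; apply. Qed.

Lemma subringM x y : S x -> S y -> S (x * y). Proof. by case: subS => _ _; apply. Qed.

Lemma subring0 : S 0. Proof. by have := subringB subring1 subring1; rewrite subrr. Qed.

Lemma subringN x : S x -> S (- x). Proof. by rewrite -sub0r; apply/subringB/subring0. Qed.

Lemma subringD x y : S x -> S y -> S (x + y).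
Proof. by move=> Sx Sy; rewrite -[y]opprK; apply: subringB => //; apply: subringN. Qed.

Lemma subring_sum (I : Type) (r : seq I) (P : pred I) (F : I -> T) :
  (forall i, P i -> S (F i)) -> S (\sum_(i <- r | P i) F i).
Proof. by apply: big_ind; [exact: subring0 | exact: subringD]. Qed.

End Subring.

Lemma center_subring (T : nzRingType) : is_subring (@center T).
Proof.
split=> [y|x y cx cy z|x y cx cy z]; first by rewrite mul1r mulr1.
  by rewrite mulrBl mulrBr cx cy.
by rewrite -mulrA cy mulrA cx mulrA.
Qed.

Definition centralizer (T : nzRingType) (x : T) (y : T) : Prop := x * y = y * x.

Lemma centralizer_subring (T : nzRingType) (x : T) : is_subring (centralizer x).
Proof.
rewrite /centralizer; split=> [|y z xy xz|y z xy xz]; first by rewrite mul1r mulr1.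
  by rewrite mulrBl mulrBr xy xz.
by rewrite mulrA xy -mulrA xz mulrA.
Qed.

Lemma center_centralizer (T : nzRingType) (x y : T) : center y -> centralizer x y.
Proof. by move=> cy; rewrite /centralizer cy. Qed.

Definition generates_over (T : nzRingType) (S : T -> Prop) (bs : seq T) : Prop :=
  forall S' : T -> Prop, is_subring S' -> (forall t, S t -> S' t) ->
    (forall b, b \in bs -> S' b) -> forall t, S' t.

Section Generation.
Local Open Scope classical_set_scope.

Lemma chain_bigcup_seq (T : eqType) (F : set (set T)) (X0 : set T) (bs : seq T) :
  F X0 -> total_on F subset -> (forall b, b \in bs -> (\bigcup_(X in F) X) b) ->
  exists2 X, F X & X0 `<=` X /\ forall b, b \in bs -> X b.
Proof.
move=> FX0 Ftot; elim: bs => [|b bs IH] Fbs; first by exists X0 => //; split.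
have [|Y FY [X0Y Ybs]] := IH; first by move=> c cbs; apply: Fbs; rewrite inE cbs orbT.
have [Z FZ Zb] := Fbs b (mem_head _ _).
have [YZ|ZY] := Ftot Y Z FY FZ.
  exists Z => //; split=> [t /X0Y/YZ //|c].
  by rewrite inE => /predU1P[->|/Ybs/YZ].
by exists Y => //; split=> // c; rewrite inE => /predU1P[->|/Ybs//]; apply: ZY.
Qed.

Lemma bigcup_chain_subring (T : nzRingType) (F : set (set T)) (X0 : set T) :
  F X0 -> (exists t, X0 t) -> total_on F subset ->
  (forall X, F X -> (exists t, X t) -> is_subring X) ->
  is_subring (\bigcup_(X in F) X).
Proof.
move=> FX0 [x0 X0x0] Ftot subF.
pose U := \bigcup_(X in F) X.
have closed2 (op : T -> T -> T) :
    (forall X, is_subring X -> forall a b, X a -> X b -> X (op a b)) ->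
    forall a b, U a -> U b -> U (op a b).
  move=> opX a b [X FX Xa] [Y FY Yb]; have [XY|YX] := Ftot X Y FX FY.
    by exists Y => //; apply: opX; [exact: subF FY (ex_intro _ b Yb)|exact: XY|].
  by exists X => //; apply: opX; [exact: subF FX (ex_intro _ a Xa)| |exact: YX].
split; first by exists X0 => //; apply: subring1; apply: subF FX0 _; exists x0.
  by apply: closed2 => X /subringB.
by apply: closed2 => X /subringM.
Qed.

Lemma maximal_subring_of_generation (T : nzRingType) (S : T -> Prop) (bs : seq T) :
  is_subring S -> (exists t, ~ S t) -> generates_over S bs -> has_maximal_subring T.
Proof.
move=> subS [t0 St0] genS.
pose Above A := [/\ is_subring A, S `<=` A & ~ forall b, b \in bs -> A b].
have AboveS : Above S by split=> // Sbs; apply: St0; exact: genS.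
(* [set0] must be allowed as the union of the empty chain; it is never maximal
   since [S] lies above it. *)
have [|A [[A0|[subA SA Abs]] Amax]] := @Zorn_bigcup T (fun A => A = set0 \/ Above A).
- move=> F FP Ftot.
  have [[X0 FX0 X0ne]|Fempty] := pselect (exists2 X, F X & exists t, X t); last first.
    by left; apply/seteqP; split=> // z [X FX Xz]; apply: Fempty; exists X => //; exists z.
  have AboveF W : F W -> (exists t, W t) -> Above W.
    by move=> FW [z Wz]; case: (FP W FW) => // W0; rewrite W0 in Wz.
  have [_ SX0 _] := AboveF X0 FX0 X0ne.
  right; split.
  + by apply: (bigcup_chain_subring FX0) => // X FX /(AboveF X FX) [].
  + by move=> t St; exists X0 => //; apply: SX0.
  + move=> /(chain_bigcup_seq FX0 Ftot) [Y FY [X0Y Ybs]].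
    have [x0 X0x0] := X0ne.
    by have [_ _] := AboveF Y FY (ex_intro _ x0 (X0Y _ X0x0)); apply.
- exfalso; apply: (Amax S); last by right.
  by rewrite A0; split=> [t []|S0]; apply: S0 (subring1 subS).
- exists A; split=> //.
    by apply: contra_notP Abs => nAbs b _; apply: contra_notP nAbs; exists b.
  move=> S' subS' AS'; have [S'bs|S'bs] := pselect (forall b, b \in bs -> S' b).
    by right; apply: genS => // t /SA /AS'.
  left=> t; split=> [S't|]; last exact: AS'.
  have [//|nAt] := pselect (A t); exfalso; apply: (Amax S').
    by split=> // AS; apply: nAt; apply: AS.
  by right; split=> // u /SA /AS'.
Qed.

End Generation.

Lemma maximal_subring_preimage (T D : nzRingType) (f : {rmorphism T -> D}) (S : D -> Prop) :
  (forall d, exists t, f t = d) -> is_maximal_subring S -> is_maximal_subring (S \o f).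
Proof.
move=> fsurj [subS [d Sd] Smax]; have [t0 ft0] := fsurj d.
have preim_subring (R : D -> Prop) : is_subring R -> is_subring (R \o f).
  case=> R1 RB RM; split=> [|x y|x y] /=; rewrite ?rmorph1 ?rmorphB ?rmorphM //.
    exact: RB.
  exact: RM.
split; [exact: preim_subring | by exists t0; rewrite /= ft0 |].
move=> S' subS' SS'; pose R d := exists2 t, S' t & f t = d.
have subR : is_subring R.
  split; first by exists 1; [apply: subring1 | rewrite rmorph1].
    by move=> _ _ [x S'x <-] [y S'y <-]; exists (x - y); [apply: subringB|rewrite rmorphB].
  by move=> _ _ [x S'x <-] [y S'y <-]; exists (x * y); [apply: subringM|rewrite rmorphM].
have SR e : S e -> R e.
  by move=> Se; have [t ft] := fsurj e; exists t => //; apply: SS'; rewrite /= ft.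
have [RS|Rall] := Smax R subR SR.
  by left=> t; split=> [S't|/SS' //]; apply/RS; exists t.
right=> t; have [s S's fs] := Rall (f t).
have S'ts : S' (t - s) by apply: SS'; rewrite /= rmorphB fs subrr; apply: subring0.
by rewrite -(subrK s t); apply: subringD.
Qed.

Section LeftIdeals.
Variable T : nzRingType.

Definition lideal_add (I J : T -> Prop) : T -> Prop :=
  fun z => exists a b, [/\ I a, J b & z = a + b].

Definition lideal_mulr (I : T -> Prop) (s : T) : T -> Prop :=
  fun z => exists2 a, I a & z = a * s.

Lemma lideal_add_left_ideal I J :
  is_left_ideal I -> is_left_ideal J -> is_left_ideal (lideal_add I J).
Proof.
case=> I0 IB IM [J0 JB JM]; split; first by exists 0, 0; rewrite addr0.
  move=> _ _ [a [b [Ia Jb ->]]] [c [d [Ic Jd ->]]].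
  by exists (a - c), (b - d); rewrite opprD addrACA; split; [apply: IB|apply: JB|].
move=> r _ [a [b [Ia Jb ->]]]; exists (r * a), (r * b).
by rewrite mulrDr; split; [apply: IM|apply: JM|].
Qed.

Lemma lideal_mulr_left_ideal I s : is_left_ideal I -> is_left_ideal (lideal_mulr I s).
Proof.
case=> I0 IB IM; split; first by exists 0; rewrite ?mul0r.
  by move=> _ _ [a Ia ->] [b Ib ->]; exists (a - b); [apply: IB|rewrite mulrBl].
by move=> r _ [a Ia ->]; exists (r * a); [apply: IM|rewrite mulrA].
Qed.

Lemma setT_left_ideal : is_left_ideal (fun _ : T => True).
Proof. by []. Qed.

Lemma maximal_left_ideal_add_one (M J : T -> Prop) :
  is_maximal_left_ideal M -> is_left_ideal J -> (exists2 j, J j & ~ M j) ->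
  exists m j, [/\ M m, J j & 1 = m + j].
Proof.
case=> [idM _ Mmax] idJ [j Jj nMj].
have MMJ m : M m -> lideal_add M J m.
  by move=> Mm; exists m, 0; split; rewrite ?addr0 //; case: idJ.
case: (Mmax _ (lideal_add_left_ideal idM idJ) MMJ) => [MJ|MJall]; last exact: MJall 1.
by exfalso; apply: nMj; apply/MJ; exists 0, j; split; rewrite ?add0r //; case: idM.
Qed.

Definition idealizer (M : T -> Prop) : T -> Prop := fun s => forall m, M m -> M (m * s).

Lemma idealizer_subring M : is_left_ideal M -> is_subring (idealizer M).
Proof.
case=> _ MB _; split=> [m Mm|a b Ma Mb m Mm|a b Ma Mb m Mm]; first by rewrite mulr1.
  by rewrite mulrBr; apply: MB; [apply: Ma|apply: Mb].
by rewrite mulrA; apply/Mb/Ma.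
Qed.

Lemma maximal_left_ideal_idealizer M :
  is_maximal_left_ideal M -> (exists s, ~ idealizer M s) -> is_maximal_subring (idealizer M).
Proof.
move=> maxM nS; have [idM _ _] := maxM; have [_ _ ML] := idM.
have MS a : M a -> idealizer M a by move=> Ma m _; apply: ML.
split=> // [|S' subS' SS']; first exact: idealizer_subring.
have [S'S|/existsPNP[s S's /existsPNP[m' Mm' nMm's]]] :=
  pselect (forall s, S' s -> idealizer M s).
  by left=> s; split=> [/S'S|/SS'].
right=> w.
have Mm's : lideal_mulr M s (m' * s) by exists m'.
have [a [_ [Ma [b Mb ->] one]]] := maximal_left_ideal_add_one maxM
  (lideal_mulr_left_ideal s idM) (ex_intro2 _ _ _ Mm's nMm's).
have -> : w = w * a + (w * b) * s by rewrite -mulrA -mulrDr -one mulr1.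
by apply: subringD => //; [|apply: subringM => //]; apply/SS'/MS/ML.
Qed.

Lemma maximal_left_ideal_inverse (M : T -> Prop) a :
  is_maximal_left_ideal M -> ~ M a -> exists b, M (b * a - 1).
Proof.
move=> maxM nMa; have [[M0 MB _] _ _] := maxM.
have Ta : lideal_mulr (fun _ => True) a a by exists 1; rewrite ?mul1r.
have [m [_ [Mm [b _ ->] one]]] := maximal_left_ideal_add_one maxM
  (lideal_mulr_left_ideal a setT_left_ideal) (ex_intro2 _ _ _ Ta nMa).
by exists b; rewrite one opprD addrCA subrr addr0 -sub0r; apply: MB.
Qed.

End LeftIdeals.

Record twosided_ideal (T : nzRingType) := TwoSidedIdeal {
  tsi_mem :> T -> Prop;
  tsi_left : is_left_ideal tsi_mem;
  tsi_right : forall r x, tsi_mem x -> tsi_mem (x * r);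
  tsi_proper : ~ tsi_mem 1 }.

Definition tsi_pred (T : nzRingType) (I : twosided_ideal T) : pred T := fun t => `[< I t >].

Lemma tsi_predE (T : nzRingType) (I : twosided_ideal T) t : (t \in tsi_pred I) = `[< I t >].
Proof. by []. Qed.

Lemma tsi_zmod_closed (T : nzRingType) (I : twosided_ideal T) : zmod_closed (tsi_pred I).
Proof.
have [I0 IB _] := tsi_left I.
split=> [|a b]; rewrite !tsi_predE; first exact/asboolP.
by move=> /asboolP Ia /asboolP Ib; apply/asboolP/IB.
Qed.

HB.instance Definition _ (T : nzRingType) (I : twosided_ideal T) :=
  GRing.isZmodClosed.Build T (tsi_pred I) (tsi_zmod_closed I).

Section TwoSidedQuotient.
Variables (T : nzRingType) (I : twosided_ideal T).
Local Open Scope quotient_scope.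

Definition quot_ring := Quotient.quot (GRing.ZmodClosed.clone T (tsi_pred I) _).
HB.instance Definition _ := GRing.Zmodule.on quot_ring.
HB.instance Definition _ := EqQuotient.on quot_ring.

Definition quot_one : quot_ring := lift_cst quot_ring 1.
Definition quot_mul := lift_op2 quot_ring *%R.
Canonical pi_quot_one_morph := PiConst quot_one.

Lemma pi_quot_mul : {morph \pi_quot_ring : x y / x * y >-> quot_mul x y}.
Proof.
move=> x y; unlock quot_mul; apply/eqP; rewrite piE Quotient.equivE.
rewrite -[_ * _](addrNK (x * repr (\pi_quot_ring y))) -mulrBr -addrA -mulrBl.
have [_ _ IL] := tsi_left I.
rewrite rpredD // tsi_predE; apply/asboolP; [apply: IL | apply: tsi_right]; apply/asboolP;
  by rewrite -tsi_predE Quotient.idealrDE opprK reprK.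
Qed.
Canonical pi_quot_mul_morph := PiMorph2 pi_quot_mul.

Lemma quot_mulA : associative quot_mul.
Proof. by move=> x y z; rewrite -[x]reprK -[y]reprK -[z]reprK !piE mulrA. Qed.
Lemma quot_mul1q : left_id quot_one quot_mul.
Proof. by move=> x; rewrite -[x]reprK !piE mul1r. Qed.
Lemma quot_mulq1 : right_id quot_one quot_mul.
Proof. by move=> x; rewrite -[x]reprK !piE mulr1. Qed.
Lemma quot_mulDl : left_distributive quot_mul +%R.
Proof. by move=> x y z; rewrite -[x]reprK -[y]reprK -[z]reprK !piE mulrDl. Qed.
Lemma quot_mulDr : right_distributive quot_mul +%R.
Proof. by move=> x y z; rewrite -[x]reprK -[y]reprK -[z]reprK !piE mulrDr. Qed.
Lemma quot_one_neq0 : quot_one != 0.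
Proof. by rewrite piE Quotient.equivE subr0 tsi_predE; apply/asboolP/tsi_proper. Qed.

HB.instance Definition _ := GRing.Zmodule_isNzRing.Build quot_ring
  quot_mulA quot_mul1q quot_mulq1 quot_mulDl quot_mulDr quot_one_neq0.

Definition quot_proj (t : T) : quot_ring := \pi t.

Lemma quot_proj_is_zmod_morphism : zmod_morphism quot_proj.
Proof. by move=> a b; rewrite /quot_proj !piE. Qed.
Lemma quot_proj_is_monoid_morphism : monoid_morphism quot_proj.
Proof. by split=> [|a b]; rewrite /quot_proj !piE. Qed.

HB.instance Definition _ := GRing.isZmodMorphism.Build T quot_ring quot_proj
  quot_proj_is_zmod_morphism.
HB.instance Definition _ := GRing.isMonoidMorphism.Build T quot_ring quot_proj
  quot_proj_is_monoid_morphism.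

Lemma quot_proj_surj (d : quot_ring) : exists t, quot_proj t = d.
Proof. by exists (repr d); apply: reprK. Qed.

Lemma quot_proj_eq0 t : quot_proj t = 0 <-> I t.
Proof.
rewrite -(rmorph0 quot_proj) (rwP eqP) /quot_proj piE Quotient.equivE subr0 tsi_predE.
by split=> /asboolP.
Qed.

End TwoSidedQuotient.

Section DivisionRing.
Variable D : nzRingType.
Hypothesis linv : forall a : D, a != 0 -> exists b, b * a = 1.

Lemma divring_inv (a : D) : a != 0 -> exists b, b * a = 1 /\ a * b = 1.
Proof.
move=> a0; have [b ba] := linv a0.
have b0 : b != 0 by apply: contra_eq_neq ba => ->; rewrite mul0r eq_sym oner_neq0.
have [c cb] := linv b0.
have ca : c = a by rewrite -[c]mulr1 -ba mulrA cb mul1r.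
by exists b; rewrite -{2}ca.
Qed.

Section Integral.
Variable x : D.

Definition sandwich (w : D) (l : nat) := \sum_(i < l.+1) x ^+ i * w * x ^+ (l - i).

Lemma sandwich_commutator w l :
  x * sandwich w l - sandwich w l * x = x ^+ l.+1 * w - w * x ^+ l.+1.
Proof.
rewrite mulr_sumr mulr_suml -sumrB.
under eq_bigr => i _ do rewrite !mulrA -exprS -[_ * x ^+ (l - i) * x]mulrA -exprSr.
rewrite -(big_mkord xpredT
  (fun i => x ^+ i.+1 * w * x ^+ (l - i) - x ^+ i * w * x ^+ (l - i).+1)).
rewrite (@telescope_sumr_eq _ _ _ (fun k => x ^+ k * w * x ^+ (l.+1 - k))) //.
  by rewrite subnn subn0 !expr0 mulr1 mul1r.
by move=> k /andP[_ kl]; rewrite subSS subSn.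
Qed.

Definition central_annihilator (p : {poly D}) :=
  [/\ p \is monic, forall i, center p`_i & root p x].

Variable p : {poly D}.
Hypotheses (p_ann : central_annihilator p)
  (p_min : forall r, central_annihilator r -> (size p <= size r)%N).
Local Notation N := (size p).-1.

Lemma size_annihilator : size p = N.+1.
Proof. by case: p_ann => /monic_neq0 p0 _ _; rewrite prednK // size_poly_gt0. Qed.

Lemma annihilator_rel : \sum_(i < N.+1) p`_i * x ^+ i = 0.
Proof. by case: p_ann => _ _ /rootP; rewrite horner_coef size_annihilator. Qed.

Lemma annihilator_size_gt1 : (0 < N)%N.
Proof.
have [/monicP p1 _ _] := p_ann; rewrite lt0n; apply/eqP => N0.
move: annihilator_rel p1; rewrite N0 big_ord1 expr0 mulr1 /lead_coef size_annihilator N0 => ->.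
by move=> /eqP; rewrite eq_sym oner_eq0.
Qed.

(* [phi] is [g(L_x, R_x)] where [p(X) - p(Y) = (X - Y) g(X, Y)], so that
   [ad_x \o phi = p(L_x) - p(R_x) = 0]. *)
Definition phi (w : D) := \sum_(l < N) p`_l.+1 * sandwich w l.

Lemma phi_centralizer w : centralizer x (phi w).
Proof.
have [_ pc _] := p_ann; apply/eqP; rewrite /centralizer -subr_eq0; apply/eqP.
have : \sum_(i < N.+1) p`_i * (x ^+ i * w - w * x ^+ i) = 0.
  under eq_bigr => i _ do rewrite mulrBr !mulrA (pc i w) -[w * _ * _]mulrA.
  by rewrite sumrB -!mulr_suml -!mulr_sumr annihilator_rel mul0r mulr0 subr0.
rewrite big_ord_recl !expr0 mul1r mulr1 subrr mulr0 add0r => <-.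
rewrite /phi mulr_sumr mulr_suml -sumrB; apply: eq_bigr => l _.
by rewrite -sandwich_commutator mulrBr !mulrA (pc l.+1 x).
Qed.

Definition powers_bimodule (u : nat -> D) := exists fam : seq (D * D),
  forall j, (j < N)%N -> u j = \sum_(ab <- fam) ab.1 * x ^+ j * ab.2.

Lemma powers_bimodule_exp : powers_bimodule (GRing.exp x).
Proof. by exists [:: (1, 1)] => j _; rewrite big_seq1 mul1r mulr1. Qed.

Lemma powers_bimodule_mull d u : powers_bimodule u -> powers_bimodule (fun j => d * u j).
Proof.
case=> fam fam_u; exists [seq (d * ab.1, ab.2) | ab <- fam] => j jN.
by rewrite fam_u // big_map mulr_sumr; apply: eq_bigr => ab _; rewrite !mulrA.
Qed.

Lemma powers_bimodule_mulr d u : powers_bimodule u -> powers_bimodule (fun j => u j * d).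
Proof.
case=> fam fam_u; exists [seq (ab.1, ab.2 * d) | ab <- fam] => j jN.
by rewrite fam_u // big_map mulr_suml; apply: eq_bigr => ab _; rewrite !mulrA.
Qed.

Lemma powers_bimodule_sub u v :
  powers_bimodule u -> powers_bimodule v -> powers_bimodule (fun j => u j - v j).
Proof.
case=> fu fu_u [fv fv_v]; exists (fu ++ [seq (- ab.1, ab.2) | ab <- fv]) => j jN.
rewrite fu_u // fv_v // big_cat big_map -sumrN; congr (_ + _).
by apply: eq_bigr => ab _; rewrite !mulNr.
Qed.

Definition nz_count (u : nat -> D) := #|[set j : 'I_N | u j != 0]|.

(* Subtracting a multiple of the commutator [d u - u d], whose [0]-th entry vanishes,
   kills the [i]-th entry without creating new nonzero entries. *)
Lemma powers_bimodule_shrink u i :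
  powers_bimodule u -> u 0%N = 1 -> (i < N)%N -> ~ center (u i) ->
  exists2 v, powers_bimodule v & v 0%N = 1 /\ (nz_count v < nz_count u)%N.
Proof.
move=> bu u0 iN /existsNP[d ud].
pose w j := d * u j - u j * d.
have bw : powers_bimodule w.
  by apply: powers_bimodule_sub; [apply: powers_bimodule_mull|apply: powers_bimodule_mulr].
have wi : w i != 0 by rewrite subr_eq0; apply/eqP => /esym.
have [e ew] := linv wi.
pose v j := u j - (u i * e) * w j.
exists v; first by apply: powers_bimodule_sub => //; apply: powers_bimodule_mull.
split; first by rewrite /v /w u0 mulr1 mul1r subrr mulr0 subr0.
apply: proper_card; apply/fintype.properP; split.
  apply/fintype.subsetP => j; rewrite !inE; apply: contra => /eqP uj.
  by rewrite /v /w uj mulr0 mul0r subrr mulr0 subrr.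
exists (Ordinal iN); rewrite !inE /=; last by rewrite /v -mulrA ew mulr1 subrr eqxx.
by apply: contra wi => /eqP ui; rewrite /w ui mulr0 mul0r subrr.
Qed.

Lemma central_powers_bimodule :
  exists2 u, powers_bimodule u & u 0%N = 1 /\ forall j, (j < N)%N -> center (u j).
Proof.
suff: forall n u, (nz_count u < n)%N -> powers_bimodule u -> u 0%N = 1 ->
    exists2 u, powers_bimodule u & u 0%N = 1 /\ forall j, (j < N)%N -> center (u j).
  by apply; [apply: ltnSn | apply: powers_bimodule_exp | rewrite expr0].
elim=> // n IH u un bu u0.
have [uc|/existsPNP[i iN nui]] := pselect (forall j, (j < N)%N -> center (u j)).
  by exists u.
have [v bv [v0 vu]] := powers_bimodule_shrink bu u0 iN nui.
by apply: (IH v) => //; apply: leq_trans vu _.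
Qed.

Definition gauge (u : nat -> D) :=
  \sum_(l < N) p`_l.+1 * \sum_(i < l.+1) x ^+ i * u (l - i)%N.

Section CentralSequence.
Variables (u : nat -> D) (fam : seq (D * D)).
Hypotheses (u_center : forall j, (j < N)%N -> center (u j))
  (fam_u : forall j, (j < N)%N -> u j = \sum_(ab <- fam) ab.1 * x ^+ j * ab.2).

Let u_center_sub (l : 'I_N) k : center (u (l - k)%N).
Proof. by apply: u_center; apply: leq_ltn_trans (leq_subr _ _) (ltn_ord l). Qed.

Let fam_u_sub (l : 'I_N) k : u (l - k)%N = \sum_(ab <- fam) ab.1 * x ^+ (l - k) * ab.2.
Proof. by apply: fam_u; apply: leq_ltn_trans (leq_subr _ _) (ltn_ord l). Qed.

Lemma phi_sum_gauge y : \sum_(ab <- fam) phi (y * ab.1) * ab.2 = gauge u * y.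
Proof.
rewrite /phi /gauge mulr_suml; under eq_bigr do rewrite mulr_suml.
rewrite exchange_big /=; apply: eq_bigr => l _; rewrite -mulrA mulr_suml.
under [in RHS]eq_bigr => i _.
  rewrite -mulrA (u_center_sub l i y) mulrA fam_u_sub mulr_sumr.
  over.
rewrite exchange_big /= mulr_sumr; apply: eq_bigr => ab _.
by rewrite /sandwich -mulrA mulr_suml !mulr_sumr; apply: eq_bigr => i _; rewrite !mulrA.
Qed.

Lemma gauge_centralizer : centralizer x (gauge u).
Proof.
have [_ pc _] := p_ann.
rewrite /gauge; apply: (subring_sum (centralizer_subring x)) => l _.
apply: (subringM (centralizer_subring x)); first exact: center_centralizer.
apply: (subring_sum (centralizer_subring x)) => i _.
apply: (subringM (centralizer_subring x)); last exact/center_centralizer/u_center_sub.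
by rewrite /centralizer -exprS -exprSr.
Qed.

(* Read as a polynomial in [x] with central coefficients [c i], [gauge u] has
   leading coefficient [p`_N * u 0 = 1] in degree [N - 1]; by minimality of [p]
   it cannot vanish. *)
Lemma gauge_neq0 : u 0%N = 1 -> gauge u != 0.
Proof.
have [/monicP p1 pc _] := p_ann.
move=> u0; apply/negP => /eqP G0.
pose c i := \sum_(l < N) (if (i <= l)%N then p`_l.+1 * u (l - i)%N else 0).
have cN : c N.-1 = 1.
  rewrite /c -(prednK annihilator_size_gt1) big_ord_recr /= leqnn subnn u0 mulr1.
  rewrite big1 ?add0r; last by move=> l _; rewrite leqNgt ltn_ord.
  by rewrite prednK ?annihilator_size_gt1 // -p1 /lead_coef size_annihilator.
have c_center i : center (c i).
  apply: (subring_sum (center_subring D)) => l _.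
  case: ifP => _; last exact: subring0 (center_subring D).
  exact: (subringM (center_subring D)).
pose r := \poly_(i < N) c i.
suff /p_min : central_annihilator r.
  by rewrite size_poly_eq ?cN ?oner_neq0 // size_annihilator ltnn.
split.
- by rewrite monicE lead_coef_poly ?annihilator_size_gt1 ?cN ?oner_neq0.
- by move=> i; rewrite coef_poly; case: ifP => // _; exact: subring0 (center_subring D).
- apply/rootP; rewrite horner_poly; apply: etrans G0; rewrite /gauge.
  under [RHS]eq_bigr => l _.
    rewrite (big_ord_widen N (fun i => x ^+ i * u (l - i)%N) (ltn_ord l)) big_mkcond mulr_sumr.
  over.
  rewrite exchange_big /=; apply: eq_bigr => i _; rewrite /c mulr_suml.
  apply: eq_bigr => l _; rewrite ltnS; case: ifP => _; last by rewrite mul0r mulr0.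
  by rewrite -mulrA (u_center_sub l i).
Qed.

End CentralSequence.

Lemma centralizer_generates : exists bs, generates_over (centralizer x) bs.
Proof.
have [u [fam fam_u] [u0 uc]] := central_powers_bimodule.
have [e [eG Ge]] := divring_inv (gauge_neq0 uc u0).
have ex : centralizer x e.
  have := congr1 (fun z => e * z * e) (gauge_centralizer uc).
  by rewrite /= !mulrA eG mul1r -!mulrA Ge mulr1 => /esym.
exists [seq ab.2 | ab <- fam] => S' subS' CS' S'bs y.
have -> : y = \sum_(ab <- fam) (e * phi (y * ab.1)) * ab.2.
  rewrite -[LHS]mul1r -eG -mulrA -(phi_sum_gauge uc fam_u) mulr_sumr.
  by under eq_bigr do rewrite mulrA.
rewrite big_seq; apply: (subring_sum subS') => ab fam_ab.
apply: (subringM subS'); last by apply: S'bs; apply: map_f.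
by apply/CS'/(subringM (centralizer_subring x)) => //; apply: phi_centralizer.
Qed.

End Integral.

Theorem divring_maximal_subring_of_noncentral_integral (p : {poly D}) (x : D) :
  p \is monic -> (forall i, center p`_i) -> root p x -> ~ center x -> has_maximal_subring D.
Proof.
move=> pm pc px /existsNP[y xy].
pose ann_size n := `[< exists2 r, central_annihilator x r & size r = n >].
have [|n /asboolP[r r_ann <-] r_min] := ex_minnP (P := ann_size).
  by exists (size p); apply/asboolP; exists p.
have r_min' r' : central_annihilator x r' -> (size r <= size r')%N.
  by move=> r'_ann; apply: r_min; apply/asboolP; exists r'.
have [bs gen] := centralizer_generates r_ann r_min'.
exact: maximal_subring_of_generation (centralizer_subring x) (ex_intro _ y xy) gen.
Qed.

End DivisionRing.

Theorem corollary3p13 (T : nzRingType) :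
  (forall x : T, jacobson x -> x = 0) ->
  has_maximal_subring T \/ center_integrally_closed T.
Proof.
move=> J0; have [|noMax] := pselect (has_maximal_subring T); [by left | right].
move=> p x pm pc px; apply: contrapT => /existsNP[y xy].
have /existsNP[M /not_implyP[maxM nMxy]] : ~ jacobson (x * y - y * x).
  by move/J0/eqP; rewrite subr_eq0 => /eqP.
have [idM M1 _] := maxM.
have M_right r m : M m -> M (m * r).
  move=> Mm; apply: contrapT => nMmr; apply: noMax; exists (idealizer M).
  by apply: maximal_left_ideal_idealizer => //; exists r => /(_ m Mm).
pose I := TwoSidedIdeal idM M_right M1; pose pi := quot_proj I.
have linv (a : quot_ring I) : a != 0 -> exists b, b * a = 1.
  move=> a0; have [t ta] := quot_proj_surj a.
  have nMt : ~ M t by move/(quot_proj_eq0 I); rewrite ta; apply/eqP.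
  have [b Mb] := maximal_left_ideal_inverse maxM nMt.
  exists (pi b); apply/eqP; rewrite -subr_eq0 -ta -(rmorph1 pi) -rmorphM -rmorphB.
  exact/eqP/quot_proj_eq0.
have [S maxS] : has_maximal_subring (quot_ring I).
  apply: (divring_maximal_subring_of_noncentral_integral linv (monic_map pi pm) _
    (rmorph_root pi px)).
    by move=> i d; rewrite coef_map; have [t <-] := quot_proj_surj d; rewrite -!rmorphM pc.
  move=> /(_ (pi y)) /eqP; rewrite -!rmorphM -subr_eq0 -rmorphB => /eqP /(quot_proj_eq0 I).
  exact: nMxy.
by apply: noMax; exists (S \o pi); apply: maximal_subring_preimage maxS; apply: quot_proj_surj.
Qed.
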